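(* Let $m,n\ge0$, let $x=(x_1,\dots,x_m)$, $y=(y_1,\dots,y_n)$, and let $H_k(x,y)$ be as in the context. Then: (1) $H_k(x,y)=\sum_{j=0}^n(-1)^je_j(y)H_k'(x)$ with $H'_k(x):=H_{k-j}(x)$, i.e. $H_k(x,y)=\sum_{j=0}^n(-1)^je_j(y)H_{k-j}(x)$ for all $k\in\mathbb Z$, where $H_{k}(x)$ is the element for $n=0$ and $e_j(y)$ is the $j$-th elementary symmetric polynomial in $y$; (2) for all $k\in\mathbb Z$, $H_k(x,y)\Delta_m(x)\Delta_n(y)=\sum_{(\sigma,\tau)\in S_m\times S_n}\mathrm{sgn}(\sigma)\mathrm{sgn}(\tau)(\sigma,\tau)\Big(\prod_{j=1}^n\big(1-\tfrac{y_j}{x_1}\big)x_1^{k}x_1^{m-1}x_2^{m-2}\cdots x_m^0\,y_1^{n-1}\cdots y_n^0\Big)$, where $S_m$ permutes the $x$'s and $S_n$ the $y$'s; (3) for $m\ge1$ and all $k\in\mathbb Z$, $H_k(x,y)-x_1H_{k-1}(x,y)=H_k(x_2,\dots,x_m,y)$; (4) if $m=1$, then $H_k(x_1,y)-x_1H_{k-1}(x_1,y)=0$ for all $k\in\mathbb Z$; (5) for every sequence of integers $\lambda_1,\dots,\lambda_m$, $\det\big(H_{\lambda_i-i+j}(x,y)\big)_{1\le i,j\le m}=\prod_{i=1}^m\prod_{j=1}^n\big(1-\tfrac{y_j}{x_i}\big)E_\lambda(x_1,\dots,x_m)$; (6) for every sequence of integers $\lambda_1,\dots,\lambda_{m+1}$,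 $\det\big(H_{\lambda_i-i+j}(x,y)\big)_{1\le i,j\le m+1}=0$.
   Context: Define $h_k=h_k(x,y)$ and $h_k^{(\infty)}$ by the expansions at $t=0$ and at $t=\infty$: $\frac{\prod_{j=1}^n(1-y_jt)}{\prod_{i=1}^m(1-x_it)}=\sum_{k\ge0}h_kt^k=\sum_{k\le n-m}h^{(\infty)}_kt^k$, with $h_k=0$ for $k<0$ and $h^{(\infty)}_k=0$ for $k>n-m$. Set $H_k(x,y)=h_k-h_k^{(\infty)}$ for $k\in\mathbb Z$. $\Delta_m(x)=\prod_{i<j}(x_i-x_j)$, $\Delta_n(y)=\prod_{i<j}(y_i-y_j)$. For integers $\lambda_1,\dots,\lambda_m$, $E_\lambda(x)$ is defined by $E_\lambda(x)\Delta_m(x)=\sum_{\sigma\in S_m}\mathrm{sgn}(\sigma)\sigma(x_1^{\lambda_1+m-1}\cdots x_m^{\lambda_m})$. *)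

From HB Require Import structures.
From mathcomp Require Import all_boot all_order all_algebra all_fingroup.
Set Implicit Arguments. Unset Strict Implicit. Unset Printing Implicit Defensive.
Import Order.TTheory GRing.Theory Num.Theory.
Local Open Scope ring_scope.

(* All objects are evaluated at points x : 'I_m -> F, y : 'I_n -> F of an
   arbitrary field F (x_i nonzero). Indices are 0-based:
   x_1 is x ord0, etc. *)
Section Defs.
Variable F : fieldType.

(* h_k : coefficient of t^k in the expansion at t = 0 of
   prod_j (1 - y_j t) / prod_i (1 - x_i t), i.e. of
   prod_j (1 - y_j t) * prod_i (sum_{l>=0} x_i^l t^l)
   (truncating the geometric series at degree k does not change the
   coefficient of t^k); h_k = 0 for k < 0. *)
Definition hzero (m n : nat) (x : 'I_m -> F) (y : 'I_n -> F) (k : int) : F :=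
  match k with
  | Posz k =>
      ((\prod_(j < n) (1 - (y j)%:P * 'X)) *
       (\prod_(i < m) (\sum_(l < k.+1) ((x i) ^+ l)%:P * 'X^l)))`_k
  | Negz _ => 0
  end.

(* h^(oo)_k : expansion at t = oo.  With t = 1/s,
   prod_j (1 - y_j t)/prod_i (1 - x_i t)
     = s^(m-n) * prod_j (s - y_j) / prod_i (s - x_i),
   and 1/(s - x_i) = - x_i^-1 * sum_{r>=0} x_i^-r s^r.  The coefficient of
   t^k = s^(-k) is the coefficient c_l of s^l, l = n - m - k, of
   prod_j (s - y_j) * prod_i (1/(s - x_i)) (zero unless k <= n - m). *)
Definition hinf (m n : nat) (x : 'I_m -> F) (y : 'I_n -> F) (k : int) : F :=
  if (k <= n%:Z - m%:Z)%R then
    let l := absz (n%:Z - m%:Z - k)%R in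
    ((\prod_(j < n) ('X - (y j)%:P)) *
     (\prod_(i < m) ((- (x i)^-1)%:P *
                     (\sum_(r < l.+1) ((x i) ^- r)%:P * 'X^r))))`_l
  else 0.

Definition Hk (m n : nat) (x : 'I_m -> F) (y : 'I_n -> F) (k : int) : F :=
  hzero x y k - hinf x y k.

Definition noy : 'I_0 -> F := fun _ => 0.

Definition elemsym (n : nat) (y : 'I_n -> F) (j : nat) : F :=
  \sum_(A : {set 'I_n} | #|A| == j) \prod_(i in A) y i.

Definition Delta (m : nat) (x : 'I_m -> F) : F :=
  \prod_(i < m) \prod_(j < m | (i < j)%N) (x i - x j).

Definition xtail (m : nat) : ('I_m -> F) -> 'I_m.-1 -> F :=
  match m return ('I_m -> F) -> 'I_m.-1 -> F with
  | 0 => fun x => x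
  | m'.+1 => fun x i => x (lift ord0 i)
  end.

Definition alt (m : nat) (lam : 'I_m -> int) (x : 'I_m -> F) : F :=
  \sum_(s : 'S_m) (-1) ^+ s *
     \prod_(i < m) (x (s i)) ^ (lam i + (m - 1 - i)%N%:Z).

Definition Elam (m : nat) (lam : 'I_m -> int) (x : 'I_m -> F) : F :=
  alt lam x / Delta x.

Definition term2 (m n : nat) (i0 : 'I_m) (k : int)
    (x : 'I_m -> F) (y : 'I_n -> F) : F :=
  ((\prod_(j < n) (1 - y j / x i0)) * ((x i0) ^ k)) *
  ((\prod_(i < m) (x i) ^+ (m - 1 - i)) * (\prod_(j < n) (y j) ^+ (n - 1 - j))).

End Defs.

From HB Require Import structures.
From mathcomp Require Import all_boot all_order all_algebra all_fingroup.
From mathcomp Require Import zify ring.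
Import GRing.Theory.
Set Implicit Arguments. Unset Strict Implicit. Unset Printing Implicit Defensive.
Local Open Scope ring_scope.

(* Multiplying the generating function by
   1 - x_i t removes x_i from both of its expansions, at t = 0 and at
   t = oo; this is the recurrence (3), and iterating it shows that k |-> H_k
   satisfies the linear recurrence with characteristic polynomial
   prod_i (1 - x_i t), which makes the rows of the matrix in (6) dependent.
   For distinct x_i, partial fractions give
     H_k = sum_l c_l x_l^k,
     c_l = prod_j (1 - y_j / x_l) x_l^(m-1) / prod_(l' <> l) (x_l - x_l'):
   for n = 0 both sides satisfy (3), and the general case follows from (1),
   which is the expansion of prod_j (1 - y_j t).  This factors the matrix
   of (5) as (x_l^(lam_i - i)) diag(c_l) (x_l^j); and since
   Delta_m(x) / prod_(l' <> l) (x_l - x_l') is a cofactor of the Vandermonde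
   matrix (by Lagrange interpolation), it turns H_k Delta_m(x) into a
   determinant whose expansion over S_m x S_n is (2). *)

Section TruncatedSeries.
Variable R : comNzRingType.
Implicit Types (a : R) (p q : {poly R}).

Definition eq_trunc K p q := forall i, (i <= K)%N -> p`_i = q`_i.

(* A coherent family lists the truncations [Q K] at order [K] of one power
   series; the coefficients h_k of the context are diagonal coefficients
   [(Q k)`_k] of products of truncated geometric series. *)
Definition coherent (Q : nat -> {poly R}) :=
  forall K K', (K <= K')%N -> eq_trunc K (Q K') (Q K).

Lemma eq_truncM K p p' q q' :
  eq_trunc K p p' -> eq_trunc K q q' -> eq_trunc K (p * q) (p' * q').
Proof.
move=> epp' eqq' i le_iK; rewrite !coefM; apply: eq_bigr => j _.
have le_jK : (j <= K)%N by apply: leq_trans le_iK; rewrite -ltnS.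
by rewrite epp' // eqq' // (leq_trans (leq_subr _ _) le_iK).
Qed.

Lemma coherentM P Q : coherent P -> coherent Q -> coherent (fun K => P K * Q K).
Proof. by move=> cP cQ K K' le_KK'; apply: eq_truncM; [apply: cP | apply: cQ]. Qed.

Lemma coherent_prod n (Q : 'I_n -> nat -> {poly R}) :
  (forall i, coherent (Q i)) -> coherent (fun K => \prod_i Q i K).
Proof.
move=> cQ K K' le_KK'; apply: (big_ind2 (eq_trunc K)) => [//|p p' q q'|i _].
- exact: eq_truncM.
- exact: cQ.
Qed.

Lemma coherent_coef Q i K : coherent Q -> (i <= K)%N -> (Q K)`_i = (Q i)`_i.
Proof. by move=> cQ le_iK; apply: cQ. Qed.

Definition inv_1mX a K : {poly R} := \sum_(l < K.+1) (a ^+ l)%:P * 'X^l.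

Lemma coef_inv_1mX a K i : (inv_1mX a K)`_i = if (i <= K)%N then a ^+ i else 0.
Proof.
rewrite /inv_1mX; under eq_bigr do rewrite mul_polyC.
by rewrite -poly_def coef_poly ltnS.
Qed.

Lemma coherent_inv_1mX a : coherent (inv_1mX a).
Proof.
move=> K K' le_KK' i le_iK.
by rewrite !coef_inv_1mX le_iK (leq_trans le_iK le_KK').
Qed.

Lemma coef_1mXM a q k :
  ((1 - a%:P * 'X) * q)`_k = q`_k - a * (if k is k'.+1 then q`_k' else 0).
Proof. by rewrite mulrBl mul1r coefB -mulrA coefCM coefXM; case: k. Qed.

Lemma coef_XmM a q k :
  (('X - a%:P) * q)`_k = (if k is k'.+1 then q`_k' else 0) - a * q`_k.
Proof. by rewrite mulrBl coefB coefCM coefXM; case: k. Qed.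

Lemma mul_1mX_inv_1mX a K : eq_trunc K ((1 - a%:P * 'X) * inv_1mX a K) 1.
Proof.
move=> [|i] le_iK; rewrite coef_1mXM coef1 !coef_inv_1mX le_iK.
  by rewrite mulr0 subr0.
by rewrite (ltnW le_iK) exprS subrr.
Qed.

Lemma coef_mul_deleted m (u Y : {poly R}) (G : 'I_m.+1 -> {poly R}) i0 k :
  eq_trunc k (u * G i0) 1 ->
  (u * (Y * \prod_i G i))`_k = (Y * \prod_(i < m) G (lift i0 i))`_k.
Proof.
move=> uG; rewrite (bigD1_ord i0) //=.
have -> : u * (Y * (G i0 * \prod_(i < m) G (lift i0 i)))
        = (Y * \prod_(i < m) G (lift i0 i)) * (u * G i0) by ring.
by rewrite (eq_truncM (fun _ _ => erefl) uG) ?mulr1.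
Qed.

Definition ext0 (f : nat -> R) (k : int) : R :=
  match k with Posz k => f k | Negz _ => 0 end.

Lemma ext0_neg f k : (k < 0)%R -> ext0 f k = 0.
Proof. by case: k => //= k; rewrite ltz_nat. Qed.

Lemma eq_ext0 f g : f =1 g -> ext0 f =1 ext0 g.
Proof. by move=> fg [k|k] //=. Qed.

Lemma ext0_rec f g a b :
  (forall k, a * f k + b * (if k is k'.+1 then f k' else 0) = g k) ->
  forall K, a * ext0 f K + b * ext0 f (K - 1) = ext0 g K.
Proof.
move=> fg [[|k]|k].
- by rewrite /= -(fg 0%N).
- have -> : k.+1%:Z - 1 = k by lia.
  by rewrite /= -(fg k.+1).
- have -> : Negz k - 1 = Negz k.+1 by lia.
  by rewrite /= !mulr0 addr0.
Qed.

Lemma sum_ord_widen0 (g : nat -> R) N N' :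
  (N <= N')%N -> (forall i, (N <= i)%N -> g i = 0) ->
  \sum_(i < N) g i = \sum_(i < N') g i.
Proof.
move=> le_NN' g0; rewrite -!(big_mkord xpredT) (big_cat_nat (leq0n N) le_NN') //=.
by rewrite [X in _ + X]big1_seq ?addr0 // => i /andP[_]; rewrite mem_index_iota => /andP[/g0].
Qed.

Lemma ext0_coefM (Y : {poly R}) N (Q : nat -> {poly R}) :
  (size Y <= N.+1)%N -> coherent Q ->
  forall L : int, ext0 (fun l => (Y * Q l)`_l) L
    = \sum_(i < N.+1) Y`_i * ext0 (fun l => (Q l)`_l) (L - i%:Z).
Proof.
move=> szY cQ [l|l] /=; last first.
  by rewrite big1 // => i _; rewrite ext0_neg ?mulr0 //; lia.
pose g i := Y`_i * ext0 (fun l => (Q l)`_l) (l%:Z - i%:Z).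
have g0 i : (l < i)%N -> g i = 0 by move=> lt_li; rewrite /g ext0_neg ?mulr0 //; lia.
have Y0 i : (N < i)%N -> g i = 0 by move=> lt_Ni; rewrite /g nth_default ?mul0r // (leq_trans szY).
have -> : (Y * Q l)`_l = \sum_(i < l.+1) g i.
  rewrite coefM; apply: eq_bigr => -[i /=]; rewrite ltnS => le_il _.
  by rewrite /g subzn //= (coherent_coef cQ (leq_subr i l)).
rewrite (sum_ord_widen0 (N' := (l + N).+1) _ g0); last by lia.
by rewrite [RHS](sum_ord_widen0 (N' := (l + N).+1) _ Y0); last by lia.
Qed.

End TruncatedSeries.

Section HFunctions.
Variable F : fieldType.

Definition inv_Xm (a : F) L : {poly F} :=
  (- a^-1)%:P * \sum_(r < L.+1) (a ^- r)%:P * 'X^r.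

Lemma coef_inv_Xm a L i : (inv_Xm a L)`_i = if (i <= L)%N then - a^-1 * a ^- i else 0.
Proof.
rewrite /inv_Xm; under eq_bigr do rewrite mul_polyC.
by rewrite -(poly_def _ (fun r => a ^- r)) coefCM coef_poly ltnS; case: ifP; rewrite ?mulr0.
Qed.

Lemma coherent_inv_Xm a : coherent (inv_Xm a).
Proof.
move=> K K' le_KK' i le_iK.
by rewrite !coef_inv_Xm le_iK (leq_trans le_iK le_KK').
Qed.

Lemma mul_Xm_inv_Xm a L : a != 0 -> eq_trunc L (('X - a%:P) * inv_Xm a L) 1.
Proof.
move=> a0 [|i] le_iL; rewrite coef_XmM coef1 !coef_inv_Xm le_iL /=.
  by rewrite expr0 invr1; field.
by rewrite (ltnW le_iL) exprS invfM; field; rewrite expf_neq0.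
Qed.

Section Vieta.
Variables (n : nat) (y : 'I_n -> F).

Lemma sum_subsets_card (g : nat -> {poly F}) :
  \sum_(J : {set 'I_n}) ((-1) ^+ #|J| * \prod_(i in J) y i) *: g #|J|
  = \sum_(j < n.+1) ((-1) ^+ j * elemsym y j) *: g j.
Proof.
rewrite (partition_big (fun J : {set 'I_n} => (inord #|J| : 'I_n.+1)) predT) //=.
apply: eq_bigr => j _; rewrite /elemsym mulr_sumr scaler_suml.
have cardJ (J : {set 'I_n}) : (#|J| <= n)%N by rewrite -[n in (_ <= n)%N]card_ord max_card.
apply: eq_big => J; first by rewrite -(inj_eq val_inj) /= inordK ?ltnS.
by move=> /eqP <-; rewrite inordK ?ltnS.
Qed.

Lemma prod_1mX_elemsym :
  \prod_(j < n) (1 - (y j)%:P * 'X) = \sum_(j < n.+1) ((-1) ^+ j * elemsym y j) *: 'X^j.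
Proof.
rewrite -(sum_subsets_card (fun j => 'X^j)).
under eq_bigr do rewrite addrC.
rewrite bigA_distr; apply: eq_bigr => J _; rewrite -big_mkcond /=.
under eq_bigr do rewrite -mulNr -polyCN.
by rewrite big_split /= prodr_const -rmorph_prod /= prodrN mul_polyC.
Qed.

Lemma prod_XsubC_elemsym :
  \prod_(j < n) ('X - (y j)%:P) = \sum_(j < n.+1) ((-1) ^+ j * elemsym y j) *: 'X^(n - j).
Proof.
rewrite -(sum_subsets_card (fun j => 'X^(n - j))).
rewrite bigA_distr (reindex_inj (@setC_inj _)) /=; apply: eq_bigr => J _.
rewrite (bigID (mem J)) /=.
rewrite (eq_bigr (fun i => - (y i)%:P)); last by move=> i Ji; rewrite in_setC Ji.
rewrite (eq_bigr (fun i => 'X)); last by move=> i Ji; rewrite in_setC (negbTE Ji).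
rewrite prodr_const; under eq_bigr do rewrite -polyCN.
rewrite -rmorph_prod /= prodrN mul_polyC mulrC; congr (_ *: 'X^_).
have cardCJ := cardC J; rewrite card_ord in cardCJ.
have cardJ' : #|(fun i : 'I_n => i \notin J)| = #|[predC J]|.
  by apply: eq_card => i; rewrite !inE.
by rewrite cardJ' -[X in _ = (X - _)%N]cardCJ addKn.
Qed.

Lemma coef_prod_1mX_elemsym k :
  (\prod_(j < n) (1 - (y j)%:P * 'X))`_k = if (k <= n)%N then (-1) ^+ k * elemsym y k else 0.
Proof.
by rewrite prod_1mX_elemsym -(poly_def _ (fun j => (-1) ^+ j * elemsym y j)) coef_poly ltnS.
Qed.

Lemma coef_prod_XsubC_elemsym L :
  (\prod_(j < n) ('X - (y j)%:P))`_L
  = if (L <= n)%N then (-1) ^+ (n - L) * elemsym y (n - L) else 0.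
Proof.
rewrite prod_XsubC_elemsym (reindex_inj rev_ord_inj) /=.
under eq_bigr => j _ do rewrite subSS (subKn (ltnSE (ltn_ord j))).
by rewrite -(poly_def _ (fun j => (-1) ^+ (n - j) * elemsym y (n - j))) coef_poly ltnS.
Qed.

Lemma size_prod_1mX : (size (\prod_(j < n) (1 - (y j)%:P * 'X))%R <= n.+1)%N.
Proof. by rewrite prod_1mX_elemsym -(poly_def _ (fun j => (-1) ^+ j * elemsym y j)) size_poly. Qed.

Lemma size_prod_XsubC_ord : size (\prod_(j < n) ('X - (y j)%:P)) = n.+1.
Proof. by rewrite size_prod_XsubC [index_enum _]unlock -enumT size_enum_ord. Qed.

End Vieta.

Section Expansions.
Variables (m n : nat) (x : 'I_m -> F) (y : 'I_n -> F).

Definition hcoef (k : nat) : F :=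
  ((\prod_(j < n) (1 - (y j)%:P * 'X)) * \prod_(i < m) inv_1mX (x i) k)`_k.

Definition hcoef_inf (L : nat) : F :=
  ((\prod_(j < n) ('X - (y j)%:P)) * \prod_(i < m) inv_Xm (x i) L)`_L.

Lemma HkE k : Hk x y k = ext0 hcoef k - ext0 hcoef_inf (n%:Z - m%:Z - k).
Proof.
have hinfE : hinf x y k = ext0 hcoef_inf (n%:Z - m%:Z - k).
  by rewrite /hinf; case: ifP => h; case E: (n%:Z - m%:Z - k) => [l|l] //=; lia.
by rewrite /Hk hinfE; case: k {hinfE}.
Qed.

End Expansions.

Section Recurrence.
Variables (m n : nat) (x : 'I_m.+1 -> F) (y : 'I_n -> F) (i0 : 'I_m.+1).
Let x' i := x (lift i0 i).

Lemma hcoef_rec k :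
  hcoef x y k - x i0 * (if k is k'.+1 then hcoef x y k' else 0) = hcoef x' y k.
Proof.
set P := fun K => (\prod_(j < n) (1 - (y j)%:P * 'X)) * \prod_i inv_1mX (x i) K.
have cP : coherent P.
  by apply: coherentM => [K K' _ //|]; apply: coherent_prod => i; apply: coherent_inv_1mX.
have -> : (if k is k'.+1 then hcoef x y k' else 0) = (if k is k'.+1 then (P k)`_k' else 0).
  by case: k => // k; rewrite (coherent_coef cP (leqnSn k)).
by rewrite -coef_1mXM; apply: coef_mul_deleted; apply: mul_1mX_inv_1mX.
Qed.

Lemma hcoef_inf_rec L : x i0 != 0 ->
  (if L is L'.+1 then hcoef_inf x y L' else 0) - x i0 * hcoef_inf x y L = hcoef_inf x' y L.
Proof.
move=> x0; set P := fun K => (\prod_(j < n) ('X - (y j)%:P)) * \prod_i inv_Xm (x i) K.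
have cP : coherent P.
  by apply: coherentM => [K K' _ //|]; apply: coherent_prod => i; apply: coherent_inv_Xm.
have -> : (if L is L'.+1 then hcoef_inf x y L' else 0) = (if L is L'.+1 then (P L)`_L' else 0).
  by case: L => // L; rewrite (coherent_coef cP (leqnSn L)).
by rewrite -coef_XmM; apply: coef_mul_deleted; apply: mul_Xm_inv_Xm.
Qed.

Lemma Hk_rec k : x i0 != 0 -> Hk x y k - x i0 * Hk x y (k - 1) = Hk x' y k.
Proof.
move=> x0; rewrite !HkE; set L := n%:Z - m%:Z - k.
have -> : n%:Z - m.+1%:Z - k = L - 1 by rewrite /L; lia.
have -> : n%:Z - m.+1%:Z - (k - 1) = L by rewrite /L; lia.
have rec0 : ext0 (hcoef x y) k - x i0 * ext0 (hcoef x y) (k - 1) = ext0 (hcoef x' y) k.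
  rewrite -mulNr -[ext0 _ k]mul1r; apply: ext0_rec => k'.
  by rewrite mul1r mulNr hcoef_rec.
have recoo : ext0 (hcoef_inf x y) (L - 1) - x i0 * ext0 (hcoef_inf x y) L
             = ext0 (hcoef_inf x' y) L.
  rewrite addrC -mulNr -[ext0 _ (L - 1)]mul1r; apply: ext0_rec => L'.
  by rewrite mul1r mulNr addrC hcoef_inf_rec.
rewrite -rec0 -recoo; ring.
Qed.

End Recurrence.

Lemma Hk_nox n (x : 'I_0 -> F) (y : 'I_n -> F) k : Hk x y k = 0.
Proof.
have e0 l : hcoef x y l = if (l <= n)%N then (-1) ^+ l * elemsym y l else 0.
  by rewrite /hcoef big_ord0 mulr1 coef_prod_1mX_elemsym.
have eoo l : hcoef_inf x y l = if (l <= n)%N then (-1) ^+ (n - l) * elemsym y (n - l) else 0.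
  by rewrite /hcoef_inf big_ord0 mulr1 coef_prod_XsubC_elemsym.
rewrite HkE (eq_ext0 e0) (eq_ext0 eoo) subr0.
case: k => [k|k] /=; last by rewrite ifF ?subrr //; lia.
have [le_kn|lt_nk] := leqP k n; last by rewrite ext0_neg ?subrr //; lia.
by rewrite subzn //= leq_subr subKn // subrr.
Qed.

Lemma Hk_elemsym_expansion m n (x : 'I_m -> F) (y : 'I_n -> F) k :
  Hk x y k = \sum_(j < n.+1) (-1) ^+ j * elemsym y j * Hk x (@noy F) (k - j%:Z).
Proof.
under [RHS]eq_bigr do rewrite HkE mulrBr.
rewrite HkE sumrB; congr (_ - _).
  have cQ := coherent_prod (fun i => coherent_inv_1mX (x i)).
  rewrite (ext0_coefM (size_prod_1mX y) cQ); apply: eq_bigr => j _.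
  rewrite coef_prod_1mX_elemsym -ltnS ltn_ord; congr (_ * _).
  by apply: eq_ext0 => l; rewrite /hcoef big_ord0 mul1r.
have cQ := coherent_prod (fun i => coherent_inv_Xm (x i)).
rewrite (ext0_coefM (eq_leq (size_prod_XsubC_ord y)) cQ) (reindex_inj rev_ord_inj) /=.
apply: eq_bigr => j _.
have le_jn : (j <= n)%N by rewrite -ltnS.
rewrite coef_prod_XsubC_elemsym subSS leq_subr subKn //; congr (_ * _).
have -> : 0%:Z - m%:Z - (k - j%:Z) = n%:Z - m%:Z - k - (n - j)%N%:Z by lia.
by apply: eq_ext0 => l; rewrite /hcoef_inf big_ord0 mul1r.
Qed.

Definition pfrac_coef m n (x : 'I_m -> F) (y : 'I_n -> F) (l : 'I_m) : F :=
  (\prod_(j < n) (1 - y j / x l)) * (x l ^+ m.-1 / \prod_(l' < m | l' != l) (x l - x l')).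

Definition pfrac_sum m n (x : 'I_m -> F) (y : 'I_n -> F) (k : int) : F :=
  \sum_(l < m) pfrac_coef x y l * x l ^ k.

Lemma subr_inj_neq0 (I : eqType) (x : I -> F) l l' : injective x -> l' != l -> x l - x l' != 0.
Proof. by move=> inj; apply: contraNneq => /subr0_eq /inj ->. Qed.

Lemma pfrac_sum_rec m n (x : 'I_m.+1 -> F) (y : 'I_n -> F) i0 k :
  (forall i, x i != 0) -> injective x ->
  pfrac_sum x y k - x i0 * pfrac_sum x y (k - 1) = pfrac_sum (fun i => x (lift i0 i)) y k.
Proof.
move=> nz inj; have expzB1 l : x l ^ (k - 1) = x l ^ k / x l by rewrite expfzDr.
rewrite /pfrac_sum mulr_sumr -sumrB (bigD1_ord i0) //= expzB1.
have -> : pfrac_coef x y i0 * x i0 ^ k - x i0 * (pfrac_coef x y i0 * (x i0 ^ k / x i0)) = 0.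
  by field.
rewrite add0r.
apply: eq_bigr => l _; rewrite expzB1 /pfrac_coef.
rewrite (bigD1_ord i0 (P := fun l' => l' != lift i0 l)) /=; last exact: neq_lift.
rewrite (eq_bigl (fun l' => l' != l)); last by move=> l'; rewrite (inj_eq (@lift_inj _ i0)).
case: m x i0 inj nz l {expzB1} => [|m] x i0 inj nz l; first by case: l.
have x0l : x (lift i0 l) - x i0 != 0 by apply: subr_inj_neq0; last exact: neq_lift.
have prod_neq0 : \prod_(l' < m.+1 | l' != l) (x (lift i0 l) - x (lift i0 l')) != 0.
  by apply/prodf_neq0 => l' l'l; apply: subr_inj_neq0; rewrite // (inj_eq (@lift_inj _ i0)).
by rewrite /= exprS; field; rewrite x0l prod_neq0 nz.
Qed.

Lemma shift_rec_eq0 (D : int -> F) a :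
  a != 0 -> (forall k, D k = a * D (k - 1)) -> D 0 = 0 -> forall k, D k = 0.
Proof.
move=> a0 Drec D0; elim/int_rect => [//|k IHk|k IHk].
  by rewrite Drec -addn1 PoszD addrK IHk mulr0.
have := Drec (- k%:Z); have -> : - k%:Z - 1 = - k.+1%:Z by lia.
rewrite IHk.
by move/esym/eqP; rewrite mulf_eq0 (negbTE a0) => /eqP.
Qed.

Lemma Hk0_single (x : 'I_1 -> F) : Hk x (@noy F) 0 = 1.
Proof.
rewrite HkE (@ext0_neg _ (hcoef_inf _ _)) // /= /hcoef big_ord0 mul1r big_ord1.
by rewrite coef_inv_1mX expr0 subr0.
Qed.

Lemma HkE_pfrac_noy m (x : 'I_m -> F) : injective x -> (forall i, x i != 0) ->
  forall k, Hk x (@noy F) k = pfrac_sum x (@noy F) k.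
Proof.
elim: m x => [|m IH] x inj nz k; first by rewrite Hk_nox /pfrac_sum big_ord0.
pose D k := Hk x (@noy F) k - pfrac_sum x (@noy F) k.
have Drec i0 k' : D k' = x i0 * D (k' - 1).
  have inj' : injective (fun i => x (lift i0 i)) by move=> a b /inj /lift_inj.
  have HkB := Hk_rec (@noy F) k' (nz i0).
  have pfB := pfrac_sum_rec (@noy F) i0 k' nz inj.
  rewrite (IH _ inj') // in HkB.
  apply/eqP; rewrite -subr_eq0; apply/eqP.
  have -> : D k' - x i0 * D (k' - 1)
          = (Hk x (@noy F) k' - x i0 * Hk x (@noy F) (k' - 1))
            - (pfrac_sum x (@noy F) k' - x i0 * pfrac_sum x (@noy F) (k' - 1)).
    by rewrite /D; ring.
  by rewrite HkB pfB subrr.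
(* [D] is multiplied by [x i0] under the shift [k -> k + 1], for every [i0]:
   two distinct [x i0] force [D = 0], and for one variable so does [D 0 = 0]. *)
suff : D k = 0 by move/eqP; rewrite subr_eq0 => /eqP.
case: m {IH} x inj nz @D Drec => [|m] x inj nz D Drec.
  apply: (shift_rec_eq0 (nz ord0) (Drec ord0)).
  rewrite /D Hk0_single /pfrac_sum big_ord1 /pfrac_coef big_ord0 big_pred0 => [|l].
    by rewrite mul1r divr1 expr0 expr0z mulr1 subrr.
  by rewrite ord1 eqxx.
have x10 : x (lift ord0 ord0) - x ord0 != 0 by apply: subr_inj_neq0.
have := Drec ord0 (k + 1); rewrite (Drec (lift ord0 ord0)) addrK => /eqP.
by rewrite -subr_eq0 -mulrBl mulf_eq0 (negbTE x10) => /eqP.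
Qed.

Lemma prod_1sub_div_elemsym n (y : 'I_n -> F) z : z != 0 ->
  \prod_(j < n) (1 - y j / z) = \sum_(j < n.+1) (-1) ^+ j * elemsym y j * z ^ (- j%:Z).
Proof.
move=> z0; have := congr1 (horner^~ z^-1) (prod_1mX_elemsym y).
rewrite /= horner_prod horner_sum => eq_z.
transitivity (\prod_(j < n) (1 - (y j)%:P * 'X).[z^-1]).
  by apply: eq_bigr => j _; rewrite !hornerE.
rewrite eq_z; apply: eq_bigr => j _.
by rewrite hornerZ hornerXn exprVn exprnN.
Qed.

Lemma HkE_pfrac m n (x : 'I_m -> F) (y : 'I_n -> F) : injective x -> (forall i, x i != 0) ->
  forall k, Hk x y k = pfrac_sum x y k.
Proof.
move=> inj nz k; rewrite Hk_elemsym_expansion.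
under eq_bigr do rewrite (HkE_pfrac_noy inj nz) /pfrac_sum mulr_sumr.
rewrite exchange_big /=; apply: eq_bigr => l _.
rewrite /pfrac_coef big_ord0 mul1r (prod_1sub_div_elemsym _ (nz l)) !mulr_suml.
apply: eq_bigr => j _; have -> : k - j%:Z = - j%:Z + k by rewrite addrC.
by rewrite expfzDr //; ring.
Qed.

Lemma Lagrange_power_sum m (x : 'I_m -> F) p : injective x -> (forall i, x i != 0) ->
  (p < m)%N -> \sum_(l < m) x l ^+ p / \prod_(l' < m | l' != l) (x l - x l') = (p == m.-1)%:R.
Proof.
(* Both sides are H_(p - m + 1)(x): the left one by partial fractions, the
   right one read off the series. *)
move=> inj nz lt_pm; set k := p%:Z - m.-1%:Z.
have := HkE_pfrac_noy inj nz k; rewrite HkE (@ext0_neg _ (hcoef_inf _ _)) ?subr0; last by lia.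
rewrite /pfrac_sum => HkE_k.
transitivity (ext0 (hcoef x (@noy F)) k).
  rewrite HkE_k; apply: eq_bigr => l _; rewrite /pfrac_coef big_ord0 mul1r.
  have -> : x l ^+ p = x l ^ (m.-1%:Z + k) by rewrite /k addrC subrK.
  by rewrite expfzDr // -exprnP; ring.
have [eq_pm|ne_pm] := eqVneq p m.-1; last by rewrite ext0_neg // /k; lia.
rewrite /k eq_pm subrr /= /hcoef big_ord0 mul1r coef0_prod big1 // => i _.
by rewrite coef_inv_1mX expr0.
Qed.

Lemma prod_pairs_rev m (f : 'I_m -> 'I_m -> F) :
  \prod_(i < m) \prod_(j < m | (i < j)%N) f (rev_ord j) (rev_ord i)
  = \prod_(i < m) \prod_(j < m | (i < j)%N) f i j.
Proof.
under eq_bigr do rewrite big_mkcond.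
rewrite exchange_big (reindex_inj rev_ord_inj) /=.
symmetry; under eq_bigr do rewrite big_mkcond.
apply: eq_bigr => i _; rewrite (reindex_inj rev_ord_inj) /=.
apply: eq_bigr => j _; rewrite !rev_ordK.
by have -> : (i < m - j.+1)%N = (j < m - i.+1)%N by apply/idP/idP => h; lia.
Qed.

Lemma det_vdm_desc m (z : 'I_m -> F) :
  \det (\matrix_(i < m, j < m) z j ^+ (m - 1 - i)) = Delta z.
Proof.
pose r : 'S_m := perm (@rev_ord_inj m).
have -> : \matrix_(i < m, j < m) z j ^+ (m - 1 - i)
        = row_perm r (col_perm r (Vandermonde m (\row_j z (rev_ord j)))).
  by apply/matrixP => i j; rewrite !mxE !permE rev_ordK /=; congr (_ ^+ _); lia.
rewrite row_permE col_permE !det_mulmx !det_perm odd_permV.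
rewrite mulrCA -signr_addb addbb expr0 mulr1 det_Vandermonde /Delta.
under eq_bigr do under eq_bigr do rewrite !mxE.
by rewrite (prod_pairs_rev (fun i j => z i - z j)).
Qed.

Lemma prod_neq_subr m (x : 'I_m -> F) :
  \prod_(l < m) \prod_(l' < m | l' != l) (x l - x l')
  = Delta x * \prod_(i < m) \prod_(j < m | (i < j)%N) (x j - x i).
Proof.
rewrite /Delta -big_split /=.
transitivity (\prod_(l < m) (\prod_(l' < m | (l < l')%N) (x l - x l') *
                             \prod_(l' < m | (l' < l)%N) (x l - x l'))).
  apply: eq_bigr => l _; rewrite (bigID (fun l' : 'I_m => (l < l')%N)) /=.
  by congr (_ * _); apply: eq_bigl => l'; rewrite -(inj_eq val_inj) /=; case: ltngtP.
rewrite !big_split /=; congr (_ * _).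
under eq_bigr do rewrite big_mkcond.
rewrite exchange_big /=; apply: eq_bigr => i _.
by rewrite [RHS]big_mkcond.
Qed.

Lemma Delta_neq0 m (x : 'I_m -> F) : injective x -> Delta x != 0.
Proof.
move=> inj; apply/prodf_neq0 => i _; apply/prodf_neq0 => j lt_ij.
by apply: subr_inj_neq0; rewrite // -(inj_eq val_inj) /= gtn_eqF.
Qed.

Lemma Delta_eq0 m (x : 'I_m -> F) a b : a != b -> x a = x b -> Delta x = 0.
Proof.
wlog lt_ab : a b / (a < b)%N.
  move=> wlog_ab ne_ab eq_xab; have [lt_ab|lt_ba|eq_ab] := ltngtP a b.
  + exact: (wlog_ab a b).
  + by apply: (wlog_ab b a); rewrite // eq_sym.
  + by move: ne_ab; rewrite -(inj_eq val_inj) /= eq_ab eqxx.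
move=> _ eq_xab; apply/eqP/prodf_eq0; exists a => //.
by apply/prodf_eq0; exists b; rewrite // eq_xab subrr.
Qed.

Lemma det_Hk_mx m n (x : 'I_m -> F) (y : 'I_n -> F) (lam : 'I_m -> int) :
  (forall i, x i != 0) -> injective x ->
  \det (\matrix_(i < m, j < m) Hk x y (lam i - i%:Z + j%:Z))
  = (\prod_(i < m) \prod_(j < n) (1 - y j / x i)) * Elam lam x.
Proof.
move=> nz inj.
pose A := \matrix_(i < m, l < m) x l ^ (lam i - i%:Z).
have factor_mx : \matrix_(i < m, j < m) Hk x y (lam i - i%:Z + j%:Z)
    = A *m diag_mx (\row_l pfrac_coef x y l) *m (Vandermonde m (\row_l x l))^T.
  rewrite mul_mx_diag; apply/matrixP => i j; rewrite !mxE (HkE_pfrac y inj nz).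
  apply: eq_bigr => l _; rewrite !mxE expfzDr // -exprnP; ring.
have detA : \det A * \prod_l x l ^+ m.-1 = alt lam x.
  have := det_mulmx A (diag_mx (\row_l x l ^+ m.-1)); rewrite det_diag.
  under eq_bigr do rewrite mxE.
  move=> <-; rewrite mul_mx_diag /alt; apply: eq_bigr => s _; congr (_ * _).
  apply: eq_bigr => i _; rewrite !mxE exprnP -expfzDr //; congr (_ ^ _).
  by have := ltn_ord i; lia.
have Vneq0 : \prod_(i < m) \prod_(j < m | (i < j)%N) (x j - x i) != 0.
  apply/prodf_neq0 => i _; apply/prodf_neq0 => j lt_ij.
  by apply: subr_inj_neq0; rewrite // -(inj_eq val_inj) /= ltn_eqF.
rewrite factor_mx !det_mulmx det_diag det_tr det_Vandermonde.
under [X in _ * X]eq_bigr do under eq_bigr do rewrite !mxE.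
under eq_bigr do rewrite mxE.
rewrite /pfrac_coef big_split /= prodf_div prod_neq_subr /Elam -detA.
by field; rewrite Delta_neq0 // Vneq0.
Qed.

Definition shift_sum N (q : {poly F}) (H : int -> F) (k : int) : F :=
  \sum_(i < N) q`_i * H (k - i%:Z).

Lemma shift_sum_1mXM N (q : {poly F}) a H k : (size q <= N)%N ->
  shift_sum N.+1 ((1 - a%:P * 'X) * q) H k = shift_sum N q (fun k => H k - a * H (k - 1)) k.
Proof.
move=> szq; rewrite /shift_sum.
under eq_bigr do rewrite coef_1mXM mulrBl.
rewrite sumrB big_ord_recr /= (nth_default _ szq) mul0r addr0.
rewrite big_ord_recl /= mulr0 mul0r add0r -sumrB; apply: eq_bigr => i _.
have -> : k - (bump 0 i)%:Z = k - i%:Z - 1 by rewrite /bump /=; lia.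
ring.
Qed.

Lemma Hk_linear_rec m n (x : 'I_m -> F) (y : 'I_n -> F) k : (forall i, x i != 0) ->
  shift_sum m.+1 (\prod_(i < m) (1 - (x i)%:P * 'X)) (Hk x y) k = 0.
Proof.
elim: m x => [|m IH] x nz.
  by rewrite /shift_sum big_ord1 big_ord0 coef1 mul1r Hk_nox.
rewrite big_ord_recl shift_sum_1mXM ?size_prod_1mX //.
rewrite -(IH (fun i => x (lift ord0 i))) //.
by apply: eq_bigr => i _; rewrite Hk_rec.
Qed.

Lemma elemsym0 n (y : 'I_n -> F) : elemsym y 0 = 1.
Proof. by rewrite /elemsym (big_pred1 set0) ?big_set0 // => A; rewrite cards_eq0 inE. Qed.

Lemma det_Hk_mxS m n (x : 'I_m -> F) (y : 'I_n -> F) (lam : 'I_m.+1 -> int) :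
  (forall i, x i != 0) ->
  \det (\matrix_(i < m.+1, j < m.+1) Hk x y (lam i - i%:Z + j%:Z)) = 0.
Proof.
move=> nz; set M := \matrix_(i, j) _; set q := \prod_(i < m) (1 - (x i)%:P * 'X).
apply/eqP; rewrite -det_tr; apply/det0P.
exists (\row_(j < m.+1) q`_(m - j)).
  apply/eqP => /matrixP /(_ 0 ord_max); rewrite !mxE subnn.
  by rewrite coef_prod_1mX_elemsym expr0 mul1r elemsym0 => /eqP; rewrite oner_eq0.
apply/matrixP => i0 i; rewrite !mxE -[RHS](Hk_linear_rec y (lam i - i%:Z + m%:Z) nz).
rewrite /shift_sum (reindex_inj rev_ord_inj) /=; apply: eq_bigr => j _.
have le_jm : (j <= m)%N by rewrite -ltnS.
rewrite !mxE /= subSS (subKn le_jm); congr (_ * Hk x y _); lia.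
Qed.

Lemma cofactor_vdm_desc m (x : 'I_m -> F) (i0 j : 'I_m) :
  (i0 : nat) = 0%N -> injective x -> (forall i, x i != 0) ->
  cofactor (\matrix_(i < m, j < m) x j ^+ (m - 1 - i)) i0 j
  = Delta x / \prod_(l < m | l != j) (x j - x l).
Proof.
move=> i00 inj nz; set V := \matrix_(i, j) _.
pose u := \col_(j < m) (Delta x / \prod_(l < m | l != j) (x j - x l)).
have V_unit : V \in unitmx by rewrite unitmxE unitfE det_vdm_desc Delta_neq0.
suff adjV_col : col i0 (\adj V) = u.
  by have := congr1 (fun M : 'cV[F]_m => M j 0) adjV_col; rewrite !mxE.
(* Both columns solve [V c = Delta x *: e_i0], [u] by Lagrange_power_sum. *)
apply: (can_inj (mulKmx V_unit)).
rewrite colE mulmxA mul_mx_adj det_vdm_desc mul_scalar_mx.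
apply/matrixP => a b; rewrite !mxE ord1 eqxx andbT.
under eq_bigr do rewrite !mxE.
transitivity (Delta x * \sum_(j < m) x j ^+ (m - 1 - a) / \prod_(l < m | l != j) (x j - x l)).
  rewrite Lagrange_power_sum //; last by have := ltn_ord a; lia.
  congr (_ * _%:R); rewrite -(inj_eq val_inj) /= i00.
  by apply/eqP/eqP; have := ltn_ord a; lia.
by rewrite mulr_sumr; apply: eq_bigr => l _; ring.
Qed.

Lemma Hk_mul_Delta m n (x : 'I_m -> F) (y : 'I_n -> F) (i0 : 'I_m) k :
  (i0 : nat) = 0%N -> (forall i, x i != 0) ->
  Hk x y k * Delta x = \det (\matrix_(i < m, j < m)
    ((if i == i0 then (\prod_(l < n) (1 - y l / x j)) * x j ^ k else 1) * x j ^+ (m - 1 - i))).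
Proof.
move=> i00 nz; set A := \matrix_(i, j) _.
have [/injectiveP inj | /injectivePn[a [b ne_ab eq_xab]]] := boolP (injectiveb x); last first.
  rewrite (Delta_eq0 ne_ab eq_xab) mulr0 -det_tr (determinant_alternate ne_ab) // => i.
  by rewrite !mxE eq_xab.
rewrite (HkE_pfrac y inj nz) /pfrac_sum mulr_suml (expand_det_row _ i0).
apply: eq_bigr => j _.
have -> : cofactor A i0 j = cofactor (\matrix_(i < m, j < m) x j ^+ (m - 1 - i)) i0 j.
  rewrite /cofactor; congr (_ * \det _); apply/matrixP => a b; rewrite !mxE.
  by rewrite eq_sym (negbTE (neq_lift _ _)) mul1r.
rewrite cofactor_vdm_desc // !mxE eqxx i00 /pfrac_coef subn0 subn1.
(* [ring] is very slow on the unnamed big products. *)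
set G := \prod_(l < n) _; set P := \prod_(l < m | l != j) _.
set a := x j ^ k; set b := x j ^+ m.-1; set D := Delta x.
ring.
Qed.

Lemma Hk_mul_Deltas m n (x : 'I_m -> F) (y : 'I_n -> F) (i0 : 'I_m) k :
  (i0 : nat) = 0%N -> (forall i, x i != 0) ->
  Hk x y k * Delta x * Delta y =
  \sum_(s : 'S_m) \sum_(t : 'S_n)
     (-1) ^+ s * (-1) ^+ t * term2 i0 k (fun i => x (s i)) (fun j => y (t j)).
Proof.
move=> i00 nz; rewrite (Hk_mul_Delta y k i00 nz) -(det_vdm_desc y).
rewrite /determinant mulr_suml; apply: eq_bigr => s _.
rewrite mulr_sumr; apply: eq_bigr => t _.
under eq_bigr do rewrite mxE.
under [X in (-1) ^+ t * X]eq_bigr do rewrite mxE.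
rewrite big_split /= -big_mkcond big_pred1_eq /term2.
have -> : \prod_(j < n) (1 - y j / x (s i0)) = \prod_(j < n) (1 - y (t j) / x (s i0)).
  by rewrite (reindex_inj (@perm_inj _ t)).
set G := \prod_(j < n) _; set X := \prod_(i < m) _; set Y := \prod_(i < n) _.
set a := x (s i0) ^ k; set e1 := (-1) ^+ s; set e2 := (-1) ^+ t.
ring.
Qed.

Lemma Hk_rec_xtail m n (x : 'I_m -> F) (y : 'I_n -> F) (i0 : 'I_m) k :
  (i0 : nat) = 0%N -> x i0 != 0 -> Hk x y k - x i0 * Hk x y (k - 1) = Hk (xtail x) y k.
Proof.
case: m x i0 => [|m] x [i0 lt_i0m] //= i00; subst i0.
have -> : Ordinal lt_i0m = ord0 by exact: val_inj.
exact: Hk_rec.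
Qed.

End HFunctions.

Theorem mainTheorem7 (F : fieldType) (m n : nat)
    (x : 'I_m -> F) (y : 'I_n -> F) (hx : forall i, x i != 0) :
  (* (1) *)
  (forall k : int,
     Hk x y k = \sum_(j < n.+1) (-1) ^+ j * elemsym y j * Hk x (@noy F) (k - (j : nat)%:Z))
  (* (2) (m >= 1; i0 is x_1) *)
  /\ (forall i0 : 'I_m, (i0 : nat) = 0%N -> forall k : int,
        Hk x y k * Delta x * Delta y =
        \sum_(s : 'S_m) \sum_(t : 'S_n)
           (-1) ^+ s * (-1) ^+ t * term2 i0 k (fun i => x (s i)) (fun j => y (t j)))
  (* (3) *)
  /\ (forall i0 : 'I_m, (i0 : nat) = 0%N -> forall k : int,
        Hk x y k - x i0 * Hk x y (k - 1) = Hk (xtail x) y k)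
  (* (4) *)
  /\ (m = 1%N -> forall i0 : 'I_m, forall k : int,
        Hk x y k - x i0 * Hk x y (k - 1) = 0)
  (* (5) *)
  /\ (injective x -> forall lam : 'I_m -> int,
        \det (\matrix_(i < m, j < m) Hk x y (lam i - (i : nat)%:Z + (j : nat)%:Z))
        = (\prod_(i < m) \prod_(j < n) (1 - y j / x i)) * Elam lam x)
  (* (6) *)
  /\ (forall lam : 'I_m.+1 -> int,
        \det (\matrix_(i < m.+1, j < m.+1) Hk x y (lam i - (i : nat)%:Z + (j : nat)%:Z))
        = 0).
Proof.
split; first exact: Hk_elemsym_expansion.
split; first by move=> i0 i00 k; exact: Hk_mul_Deltas.
split; first by move=> i0 i00 k; exact: Hk_rec_xtail.
split; first by move=> m1 i0 k; subst m; rewrite (Hk_rec y k (hx i0)) Hk_nox.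
split; first by move=> inj lam; exact: det_Hk_mx.
by move=> lam; exact: det_Hk_mxS.
Qed.
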